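(* Let $H$ be a graph with at least one edge and no isolated vertices, and suppose $H$ is not isomorphic to a star $K_{1,m}$ for any $m\ge1$. Let $t\ge1$, and let $C$ be the graph obtained from $\mu_t(H)$ by adding $\ell\ge1$ new vertices, each adjacent only to the root $w$. Then $\det(C)=\det(\mu_t(H))+\ell-1$.
   Context: All graphs are finite and simple. For a graph $G$ with $V(G)=\{v_1,\dots,v_n\}$ and an integer $t\ge1$, the generalized Mycielskian $\mu_t(G)$ has vertex set $\{u_i^s: 1\le i\le n,\ 0\le s\le t\}\cup\{w\}$, where $u_i^0$ is identified with $v_i$. Its edges are: $u_i^0u_j^0$ for each edge $v_iv_j$ of $G$; $u_i^su_j^{s+1}$ and $u_j^su_i^{s+1}$ for each edge $v_iv_j$ of $G$ and each $0\le s<t$; and $u_i^tw$ for all $1\le i\le n$; $w$ is the root. A set $S\subseteq V(G)$ is a determining set for $G$ if the only automorphism of $G$ fixing every vertex of $S$ is the identity; $\det(G)$ is the minimum size of a determining set. *)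

From mathcomp Require Import all_boot all_fingroup.
Set Implicit Arguments. Unset Strict Implicit. Unset Printing Implicit Defensive.

Definition simple_graph (V : finType) (e : rel V) : Prop :=
  symmetric e /\ irreflexive e.

Definition is_aut (V : finType) (e : rel V) (f : {perm V}) : bool :=
  [forall x, forall y, e (f x) (f y) == e x y].

Definition determining (V : finType) (e : rel V) (S : {set V}) : bool :=
  [forall f : {perm V}, (is_aut e f && [forall x in S, f x == x]) ==> (f == 1%g)].

Lemma determining_exists (V : finType) (e : rel V) :
  exists n, [exists S : {set V}, (#|S| == n) && determining e S].
Proof.
exists #|[set: V]|; apply/existsP; exists [set: V]; rewrite eqxx /=.
apply/forallP => f; apply/implyP => /andP [_ /forallP H]; apply/eqP/permP => x.
by rewrite perm1; apply/eqP; have := H x; rewrite in_setT.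
Qed.

Definition det_num (V : finType) (e : rel V) : nat := ex_minn (determining_exists e).

Definition isomorphic (V V' : finType) (e : rel V) (e' : rel V') : Prop :=
  exists f : V -> V', bijective f /\ forall x y, e' (f x) (f y) = e x y.

(* The star K_{1,m}: centre None, leaves Some i, i < m. *)
Definition star_rel (m : nat) : rel (option 'I_m) :=
  fun x y => (x == None) (+) (y == None).

(* Generalized Mycielskian mu_t(G): vertex Some (v_i, s) is u_i^s (s = 0..t), None is the root w. *)
Definition myc_rel (T : finType) (e : rel T) (t : nat) : rel (option (T * 'I_t.+1)) :=
  fun x y =>
    match x, y with
    | Some (i, s), Some (j, r) =>
        e i j && (((nat_of_ord s == 0) && (nat_of_ord r == 0))
                  || (nat_of_ord r == s.+1) || (nat_of_ord s == r.+1))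
    | Some (_, s), None => nat_of_ord s == t
    | None, Some (_, r) => nat_of_ord r == t
    | None, None => false
    end.

Arguments myc_rel {T} e t.

Definition myc_pendant_rel (T : finType) (e : rel T) (t l : nat)
  : rel (option (T * 'I_t.+1) + 'I_l) :=
  fun x y =>
    match x, y with
    | inl a, inl b => myc_rel e t a b
    | inl a, inr _ => a == None
    | inr _, inl b => b == None
    | inr _, inr _ => false
    end.

Arguments myc_pendant_rel {T} e t l.
Arguments star_rel m : clear implicits.

From mathcomp Require Import all_boot all_fingroup.
From mathcomp Require Import zify.
Set Implicit Arguments. Unset Strict Implicit. Unset Printing Implicit Defensive.

(* 1. The root is fixed by every automorphism of mu_t(H).  With n = |V(H)|, w
      has the "root profile": degree n, an independent neighbourhood, exactly
      n vertices at distance two, and every vertex y at distance two has twice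
      as many neighbours as it shares with w.  The profile is invariant under
      automorphisms; counting neighbourhoods level by level shows that a vertex
      u_i^t with this profile makes i a star centre of H, and a vertex u_i^s
      with s < t forces every neighbour of i to be a leaf, so that u_i^s has at
      most 3 vertices at distance two while n = 2 deg(i) > 2.
   2. In C the pendant vertices have degree 1 and all other vertices degree at
      least 2, so automorphisms of C restrict to mu_t(H); conversely, an
      automorphism of mu_t(H) fixes w and extends by the identity on the
      pendants; and any two pendants can be swapped.
   3. Hence a minimum determining set of mu_t(H) plus all pendants but one
      determines C, and any determining set of C consists of a determining set
      of mu_t(H) and at least l - 1 pendants. *)

Lemma card_sum_pred (A B : finType) (P : pred (A + B)) :
  #|[set x | P x]| = #|[set a | P (inl a)]| + #|[set b | P (inr b)]|.
Proof. by rewrite -!sum1dep_card big_sumType. Qed.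

Lemma card_option_pred (A : finType) (P : pred (option A)) :
  #|[set x | P x]| = P None + #|[set a | P (Some a)]|.
Proof.
set B := [set a | P (Some a)].
have NnotinB : None \notin Some @: B by apply/imsetP => -[].
have -> : [set x | P x] = if P None then None |: (Some @: B) else Some @: B.
  have Some_inj : injective (@Some A) by move=> ? ? [].
  apply/setP => -[a|]; case PN: (P None);
    by rewrite ?inE ?mem_imset ?inE ?PN ?(negbTE NnotinB) ?eqxx.
by case: (P None); rewrite ?cardsU1 ?NnotinB card_imset //; move=> ? ? [].
Qed.

Lemma card_sum_set (A B : finType) (S : {set A + B}) :
  #|S| = #|[set a | inl a \in S]| + #|[set b | inr b \in S]|.
Proof. by rewrite -cardsE card_sum_pred. Qed.

Lemma mem_inl_sum_set (A B : finType) (S : {set A}) (J : {set B}) a :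
  (inl a \in inl @: S :|: inr @: J) = (a \in S).
Proof.
rewrite inE mem_imset; last by move=> ? ? [].
by apply/orb_idr => /imsetP [].
Qed.

Lemma mem_inr_sum_set (A B : finType) (S : {set A}) (J : {set B}) j :
  (inr j \in inl @: S :|: inr @: J) = (j \in J).
Proof.
rewrite inE mem_imset; last by move=> ? ? [].
by apply/orb_idl => /imsetP [].
Qed.

Section Automorphisms.
Variables (X : finType) (E : rel X).

Lemma is_autP (f : {perm X}) : reflect (forall a b, E (f a) (f b) = E a b) (is_aut E f).
Proof.
apply: (iffP forallP) => [h a b | h a]; last by apply/forallP => b; rewrite h.
by have /forallP/(_ b)/eqP := h a.
Qed.

Lemma determiningP (S : {set X}) :
  reflect (forall f, is_aut E f -> {in S, forall x, f x = x} -> f = 1%g) (determining E S).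
Proof.
apply: (iffP forallP) => [h f af fS | h f]; last first.
  by apply/implyP => /andP [af /forallP fS]; apply/eqP/h => // x xS; apply/eqP/(implyP (fS x)).
by apply/eqP/(implyP (h f)); rewrite af; apply/forallP => x; apply/implyP => /fS ->.
Qed.

Lemma det_num_le (S : {set X}) : determining E S -> det_num E <= #|S|.
Proof.
move=> dS; rewrite /det_num; case: ex_minnP => m _; apply.
by apply/existsP; exists S; rewrite eqxx.
Qed.

Lemma det_num_witness : exists2 S : {set X}, #|S| = det_num E & determining E S.
Proof.
by rewrite /det_num; case: ex_minnP => m /existsP [S /andP [/eqP cS dS]] _; exists S.
Qed.

Definition nbhd (a : X) : {set X} := [set y | E a y].
Definition sphere2 (a : X) : {set X} :=
  [set y | (y != a) && ~~ E a y && [exists z, E a z && E z y]].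

Lemma mem_sphere2 x y z : y != x -> ~~ E x y -> E x z -> E z y -> y \in sphere2 x.
Proof.
move=> y_neq_x xy_nadj xz zy; rewrite inE y_neq_x xy_nadj.
by apply/existsP; exists z; rewrite xz.
Qed.

Definition root_profile (n : nat) (x : X) : Prop :=
  [/\ #|nbhd x| = n,
      forall a b, E x a -> E x b -> ~~ E a b,
      forall y, y \in sphere2 x -> #|nbhd y| = 2 * #|nbhd y :&: nbhd x|
    & #|sphere2 x| = n].

Section Transport.
Variable f : {perm X}.
Hypothesis fE : forall a b, E (f a) (f b) = E a b.

Lemma mem_perm_imset (A : {set X}) y : (y \in f @: A) = (f^-1%g y \in A).
Proof. by rewrite -{1}(permKV f y) mem_imset //; apply: perm_inj. Qed.

Lemma card_perm_imset (A : {set X}) : #|f @: A| = #|A|.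
Proof. by rewrite card_imset //; apply: perm_inj. Qed.

Lemma nbhd_aut a : nbhd (f a) = f @: nbhd a.
Proof. by apply/setP => y; rewrite mem_perm_imset !inE -{1}(permKV f y) fE. Qed.

Lemma card_nbhd_aut a : #|nbhd (f a)| = #|nbhd a|.
Proof. by rewrite nbhd_aut card_perm_imset. Qed.

Lemma sphere2_aut a : sphere2 (f a) = f @: sphere2 a.
Proof.
apply/setP => y; rewrite mem_perm_imset !inE -{1 2 3}(permKV f y) fE (inj_eq perm_inj).
congr (_ && _); apply/existsP/existsP => [[z]|[z]]; last by exists (f z); rewrite !fE.
by rewrite -[z](permKV f) !fE => zP; exists (f^-1%g z).
Qed.

Lemma root_profile_aut n x : root_profile n x -> root_profile n (f x).
Proof.
case=> deg indep dist2 sph; split.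
- by rewrite card_nbhd_aut.
- by move=> a b; rewrite -(permKV f a) -(permKV f b) !fE; apply: indep.
- move=> y; rewrite sphere2_aut mem_perm_imset => /dist2 deg_y.
  rewrite -(permKV f y) !nbhd_aut -imsetI; last by move=> ? ? _ _; apply: perm_inj.
  by rewrite !card_perm_imset.
- by rewrite sphere2_aut card_perm_imset.
Qed.
End Transport.

End Automorphisms.

Definition star_centre (T : finType) (e : rel T) (c : T) : Prop :=
  (forall k, k != c -> e c k) /\ (forall a b, e a b -> (a == c) || (b == c)).

Lemma card_ge2_of_edge (T : finType) (e : rel T) :
  irreflexive e -> (exists a b, e a b) -> 1 < #|T|.
Proof.
move=> e_irr [a [b ab]]; have a_neq_b : a != b by apply: contraTneq ab => ->; rewrite e_irr.
by have := max_card [set a; b]; rewrite cards2 a_neq_b.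
Qed.

Lemma star_centre_isomorphic (T : finType) (e : rel T) (c : T) :
  irreflexive e -> symmetric e -> star_centre e c -> 2 <= #|T| ->
  isomorphic e (star_rel #|T|.-1).
Proof.
move=> e_irr e_sym [c_adj through_c] card_ge2.
have card_eq : #|T| = #|{: option 'I_#|T|.-1}| by rewrite card_option card_ord; lia.
pose enc (x : T) : option 'I_#|T|.-1 := enum_val (cast_ord card_eq (enum_rank x)).
pose dec (y : option 'I_#|T|.-1) : T := enum_val (cast_ord (esym card_eq) (enum_rank y)).
have encK : cancel enc dec by move=> x; rewrite /enc /dec enum_valK cast_ordK enum_rankK.
have decK : cancel dec enc by move=> y; rewrite /enc /dec enum_valK cast_ordKV enum_rankK.
pose f x := tperm (enc c) None (enc x).
have f_root x : (f x == None) = (x == c).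
  by rewrite -(tpermL (enc c) None) /f !(inj_eq perm_inj) (inj_eq (can_inj encK)).
exists f; split.
  exists (fun y => dec (tperm (enc c) None y)) => [x|y].
    by rewrite /f tpermK encK.
  by rewrite /f decK tpermK.
move=> x y; rewrite /star_rel !f_root.
have [->|x_neq_c] := eqVneq x c.
  by have [->|y_neq_c] := eqVneq y c; [rewrite e_irr | rewrite c_adj].
have [->|y_neq_c] := eqVneq y c; first by rewrite e_sym c_adj.
by apply/esym/negP => /through_c; rewrite (negbTE x_neq_c) (negbTE y_neq_c).
Qed.

(* Neighbourhoods in mu_t(H): u_i^s and u_k^r are adjacent iff i ~ k in H and the
   levels s, r are adjacent in the path 0 - 1 - ... - t with a loop at 0. *)
Section MycielskianCounts.
Variables (T : finType) (e : rel T) (t : nat).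
Local Notation V := (option (T * 'I_t.+1)).
Local Notation E := (myc_rel e t).

Definition level_adj (s r : nat) : bool :=
  ((s == 0) && (r == 0)) || (r == s.+1) || (s == r.+1).
Definition level_nbhd (s : nat) : {set 'I_t.+1} := [set r : 'I_t.+1 | level_adj s r].

Lemma myc_adj_SS i s k r : E (Some (i, s)) (Some (k, r)) = e i k && level_adj s r.
Proof. by []. Qed.

Lemma card_nbhdI_SS i s k r :
  #|nbhd E (Some (i, s)) :&: nbhd E (Some (k, r))| =
  ((s == t :> nat) && (r == t :> nat))
  + #|nbhd e i :&: nbhd e k| * #|level_nbhd s :&: level_nbhd r|.
Proof.
have -> : nbhd E (Some (i, s)) :&: nbhd E (Some (k, r)) =
    [set y | E (Some (i, s)) y && E (Some (k, r)) y] by apply/setP => y; rewrite !inE.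
rewrite card_option_pred -cardsX; congr (_ + _).
by apply: eq_card => -[j q]; rewrite !inE /= andbACA.
Qed.

Lemma card_nbhd_S i s :
  #|nbhd E (Some (i, s))| = (s == t :> nat) + #|nbhd e i| * #|level_nbhd s|.
Proof. by rewrite -[nbhd _ _]setIid card_nbhdI_SS !setIid andbb. Qed.

Lemma eq_inord v (r : 'I_t.+1) : v < t.+1 -> (r == inord v) = (nat_of_ord r == v).
Proof. by move=> v_lt; rewrite -val_eqE /= inordK. Qed.

Lemma card_level_nbhd_lt s : s < t -> #|level_nbhd s| = 2.
Proof.
move=> s_lt; have -> : level_nbhd s = [set inord s.+1; inord s.-1].
  by apply/setP => r; rewrite !inE !eq_inord /level_adj; lia.
by rewrite cards2 -val_eqE /= !inordK; lia.
Qed.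

Lemma card_level_nbhd_top : 1 <= t -> #|level_nbhd t| = 1.
Proof.
move=> t_ge1; have -> : level_nbhd t = [set inord t.-1].
  by apply/setP => r; rewrite !inE !eq_inord /level_adj; have := ltn_ord r; lia.
by rewrite cards1.
Qed.

Lemma card_level_nbhd_two_below s :
  0 < s <= t -> #|level_nbhd (s - 2) :&: level_nbhd s| = 1.
Proof.
move=> s_range; have -> : level_nbhd (s - 2) :&: level_nbhd s = [set inord s.-1].
  by apply/setP => r; rewrite !inE !eq_inord /level_adj; have := ltn_ord r; lia.
by rewrite cards1.
Qed.

Hypothesis t_ge1 : 1 <= t.
Hypothesis e_sym : symmetric e.
Hypothesis no_isolated : forall x, exists y, e x y.

Lemma root_profile_root : root_profile E #|T| None.
Proof.
split.
- rewrite /nbhd card_option_pred /= -[#|T|]muln1 -cardsT -(cards1 (@ord_max t)) -cardsX.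
  by apply: eq_card => -[j q]; rewrite !inE /= -val_eqE.
- case=> [[j r]|] // [[k q]|] //= /eqP r_top /eqP q_top.
  by rewrite /level_adj r_top q_top; apply/negP; lia.
- case=> [[k q]|]; rewrite inE //= => /andP [q_top
    /existsP [[[j r]|] //= /andP [/eqP r_top /andP [_ adj_rq]]]].
  have q_below : q = t.-1 :> nat.
    by move: adj_rq; rewrite /level_adj r_top; have := ltn_ord q; lia.
  rewrite card_nbhd_S card_level_nbhd_lt; last by lia.
  have -> : nbhd E (Some (k, q)) :&: nbhd E None =
      [set y | E (Some (k, q)) y && E None y] by apply/setP => y; rewrite !inE.
  rewrite card_option_pred /=.
  have -> : [set z | E (Some (k, q)) (Some z) && E None (Some z)] =
      setX (nbhd e k) [set @ord_max t].
    apply/setP => -[j' r']; rewrite !inE /= -val_eqE /= /level_adj q_below.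
    by have := ltn_ord r'; case: (e k j') => /=; lia.
  by rewrite cardsX cards1 /= (negbTE q_top); lia.
- have -> : sphere2 E None = [set y : V | if y is Some z then nat_of_ord z.2 == t.-1 else false].
    apply/setP => -[[k q]|]; rewrite !inE //=; apply/idP/idP.
      case/andP => q_top /existsP [[[j r]|] //= /andP [/eqP r_top /andP [_ adj_rq]]].
      by move: adj_rq q_top; rewrite /level_adj r_top; have := ltn_ord q; lia.
    move=> /eqP q_below; have [j kj] := no_isolated k.
    apply/andP; split; first by lia.
    apply/existsP; exists (Some (j, @ord_max t)).
    by rewrite /= eqxx /= e_sym kj /level_adj /=; lia.
  rewrite card_option_pred /= -[#|T|]muln1 -cardsT -(cards1 (inord t.-1 : 'I_t.+1)) -cardsX.
  by apply: eq_card => -[j q]; rewrite !inE /= eq_inord //; lia.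
Qed.
End MycielskianCounts.

Section RootFixed.
Variables (T : finType) (e : rel T) (t : nat).
Local Notation V := (option (T * 'I_t.+1)).
Local Notation E := (myc_rel e t).
Hypothesis t_ge1 : 1 <= t.
Hypothesis e_sym : symmetric e.
Hypothesis e_irr : irreflexive e.
Hypothesis no_isolated : forall x, exists y, e x y.
Hypothesis has_edge : exists a b, e a b.
Hypothesis no_star_centre : forall c, ~ star_centre e c.

(* The only graphs with an edge on two vertices are stars, so |V(H)| > 2. *)
Lemma card_gt2 : 2 < #|T|.
Proof.
have [a [b ab]] := has_edge.
have a_neq_b : a != b by apply: contraTneq ab => ->; rewrite e_irr.
rewrite ltn_neqAle (card_ge2_of_edge e_irr has_edge) andbT; apply/eqP => card2.
apply: (no_star_centre (c := a)).
have ab_all : [set a; b] = setT.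
  by apply/eqP; rewrite eqEcard subsetT cardsT cards2 a_neq_b -card2.
have a_or_b k : (k == a) || (k == b) by move/setP/(_ k): ab_all; rewrite !inE.
split=> [k k_neq_a | u v uv]; first by have := a_or_b k; rewrite (negbTE k_neq_a) => /eqP ->.
have := a_or_b u; case/orP => /eqP u_eq; first by rewrite u_eq eqxx.
have := a_or_b v; case/orP => /eqP v_eq; first by rewrite v_eq eqxx orbT.
by move: uv; rewrite u_eq v_eq e_irr.
Qed.

Lemma nbhd_nonempty i : 0 < #|nbhd e i|.
Proof. by have [j ij] := no_isolated i; apply/card_gt0P; exists j; rewrite inE. Qed.

(* A top-level vertex u_i^t with the root profile makes i a star centre:
   deg(i) = n - 1, and every other vertex k is a leaf by the distance-two
   condition at u_k^t. *)
Lemma no_root_profile_top i (s : 'I_t.+1) :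
  s = t :> nat -> root_profile E #|T| (Some (i, s)) -> False.
Proof.
move=> s_top [deg _ dist2 _].
have deg_i : #|nbhd e i| = #|T|.-1.
  by move: deg; rewrite card_nbhd_S s_top eqxx card_level_nbhd_top //; lia.
have nbhd_i : nbhd e i = ~: [set i].
  apply/eqP; rewrite eqEcard cardsC1 deg_i leqnn andbT.
  by apply/subsetP => k; rewrite !inE; apply: contraTneq => ->; rewrite e_irr.
have i_adj k : k != i -> e i k by rewrite -in_setC1 -nbhd_i inE.
have leaf k : k != i -> #|nbhd e k| = 1.
  move=> k_neq_i.
  have : Some (k, s) \in sphere2 E (Some (i, s)).
    apply: (mem_sphere2 (z := None)); rewrite /= ?s_top //.
    - by apply: contraNneq k_neq_i => -[->].
    - by apply/nandP; right; lia.
  move/dist2; rewrite card_nbhd_S card_nbhdI_SS s_top eqxx setIid card_level_nbhd_top //.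
  rewrite nbhd_i -setDE (cardsD1 i (nbhd e k)) inE e_sym i_adj //.
  by have := nbhd_nonempty k; lia.
apply: (no_star_centre (c := i)); split => // u v uv.
have [//|u_neq_i] := eqVneq u i.
have /eqP/cards1P [x nbhd_u] := leaf u u_neq_i.
have : v \in nbhd e u by rewrite inE.
have : i \in nbhd e u by rewrite inE e_sym i_adj.
by rewrite nbhd_u !inE => /eqP -> /eqP ->; rewrite eqxx orbT.
Qed.

(* Below the top, the distance-two condition at u_k^s and at u_k^q gives
   deg(k) = 2c and deg(k) = c for the number c of common neighbours of i and k in H;
   so i and k can have no common neighbour. *)
Lemma root_profile_level_clash i (s : 'I_t.+1) k (q : 'I_t.+1) :
  root_profile E #|T| (Some (i, s)) -> s < t -> q < t ->
  #|level_nbhd t q :&: level_nbhd t s| = 1 ->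
  Some (k, s) \in sphere2 E (Some (i, s)) -> Some (k, q) \in sphere2 E (Some (i, s)) ->
  0 < #|nbhd e k :&: nbhd e i| -> False.
Proof.
case=> _ _ dist2 _ s_lt q_lt one_common /dist2 deg_ks /dist2 deg_kq common.
move: deg_ks deg_kq; rewrite !card_nbhd_S !card_nbhdI_SS setIid one_common.
by rewrite !card_level_nbhd_lt //; lia.
Qed.

(* The clash at levels s and q forces every neighbour of a neighbour of i to be i:
   on the bottom level use q = 1, in the middle q = s - 2. *)
Lemma root_profile_bottom_local_star i (s : 'I_t.+1) :
  s = 0 :> nat -> 1 < t -> root_profile E #|T| (Some (i, s)) ->
  forall j k, e i j -> e j k -> k = i.
Proof.
move=> s0 t_gt1 prof j k ij jk; apply/eqP/negP => /negP k_neq_i.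
have ik : ~~ e i k.
  apply/negP => ik; case: prof => _ indep _ _.
  have := indep (Some (j, s)) (Some (k, s)).
  by rewrite !myc_adj_SS /level_adj s0 ij ik jk => /(_ isT isT).
pose q : 'I_t.+1 := inord 1.
have q1 : q = 1 :> nat by rewrite inordK //; lia.
have neq l : (Some (k, l) : V) != Some (i, s) by apply: contraNneq k_neq_i => -[->].
apply: (root_profile_level_clash (k := k) (q := q) prof).
- by rewrite s0; lia.
- by rewrite q1.
- by rewrite q1 s0 setIC; apply: (card_level_nbhd_two_below (s := 1)); lia.
- apply: (mem_sphere2 (z := Some (j, s))) => //.
  + by rewrite myc_adj_SS (negbTE ik).
  + by rewrite myc_adj_SS ij /level_adj s0.
  + by rewrite myc_adj_SS jk /level_adj s0.
- apply: (mem_sphere2 (z := Some (j, s))) => //.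
  + by rewrite myc_adj_SS (negbTE ik).
  + by rewrite myc_adj_SS ij /level_adj s0.
  + by rewrite myc_adj_SS jk /level_adj s0 q1.
- by apply/card_gt0P; exists j; rewrite !inE e_sym jk ij.
Qed.

Lemma root_profile_middle_local_star i (s : 'I_t.+1) :
  0 < s < t -> root_profile E #|T| (Some (i, s)) ->
  forall j k, e i j -> e j k -> k = i.
Proof.
move=> s_range prof j k ij jk; apply/eqP/negP => /negP k_neq_i.
pose up : 'I_t.+1 := inord s.+1.
pose down : 'I_t.+1 := inord s.-1.
pose q : 'I_t.+1 := inord (s - 2).
have up_val : up = s.+1 :> nat by rewrite inordK //; lia.
have down_val : down = s.-1 :> nat by rewrite inordK //; lia.
have q_val : q = s - 2 :> nat by rewrite inordK //; lia.
have neq l : (Some (k, l) : V) != Some (i, s) by apply: contraNneq k_neq_i => -[->].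
have q_nadj : ~~ E (Some (i, s)) (Some (k, q)).
  rewrite myc_adj_SS /level_adj q_val; have [s1 | s_gt1] : s = 1 :> nat \/ 1 < s by lia.
    apply/nandP; left; apply/negP => ik; case: prof => _ indep _ _.
    have := indep (Some (j, q)) (Some (k, q)).
    by rewrite !myc_adj_SS /level_adj q_val s1 ij ik jk => /(_ isT isT).
  by apply/nandP; right; lia.
apply: (root_profile_level_clash (k := k) (q := q) prof).
- by lia.
- by rewrite q_val; lia.
- by rewrite q_val; apply: card_level_nbhd_two_below; lia.
- apply: (mem_sphere2 (z := Some (j, up))) => //.
  + by rewrite myc_adj_SS /level_adj; apply/nandP; right; lia.
  + by rewrite myc_adj_SS ij /level_adj up_val; lia.
  + by rewrite myc_adj_SS jk /level_adj up_val; lia.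
- apply: (mem_sphere2 (z := Some (j, down))) => //.
  + by rewrite myc_adj_SS ij /level_adj down_val; lia.
  + by rewrite myc_adj_SS jk /level_adj down_val q_val; lia.
- by apply/card_gt0P; exists j; rewrite !inE e_sym jk ij.
Qed.

(* When t = 1 the bottom vertex u_i^0 forces deg(i) = 1, hence n = 2. *)
Lemma no_root_profile_bottom_single i (s : 'I_t.+1) :
  s = 0 :> nat -> t = 1 -> root_profile E #|T| (Some (i, s)) -> False.
Proof.
move=> s0 t1 [deg _ dist2 _]; have [j ij] := no_isolated i.
have top_val : nat_of_ord (@ord_max t) = 1 by rewrite /= t1.
have : Some (i, @ord_max t) \in sphere2 E (Some (i, s)).
  apply: (mem_sphere2 (z := Some (j, s))).
  - by apply/eqP => -[/(congr1 val)] /=; lia.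
  - by rewrite myc_adj_SS e_irr.
  - by rewrite myc_adj_SS ij /level_adj s0.
  - by rewrite myc_adj_SS e_sym ij /level_adj s0 top_val.
move/dist2; rewrite card_nbhd_S card_nbhdI_SS setIid top_val s0 t1 setIC.
rewrite card_level_nbhd_top ?(card_level_nbhd_two_below (s := 1)) //.
move: deg; rewrite card_nbhd_S card_level_nbhd_lt s0 t1 //.
by have := card_gt2; lia.
Qed.

(* If every neighbour of i is a leaf, the vertices at distance two from u_i^s
   (s < t) are w and copies of i on at most two other levels. *)
Definition two_step_levels (s : nat) : {set 'I_t.+1} :=
  [set r : 'I_t.+1 | (r != s :> nat) && [exists q : 'I_t.+1, level_adj s q && level_adj q r]].

Lemma card_two_step_levels s : #|two_step_levels s| <= 2.
Proof.
pose other := if s is 0 then 1 else s - 2.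
apply: leq_trans (_ : #|[set inord (s + 2); inord other]| <= 2); last first.
  by rewrite cards2; case: (_ != _).
apply/subset_leq_card/subsetP => r; rewrite !inE => /andP [r_neq /existsP [q /andP [sq qr]]].
have [r_up | r_other] : val r = s + 2 \/ val r = other.
  by rewrite /other; case: s r_neq sq qr {other} => [|s'] /=; rewrite /level_adj; lia.
- by rewrite -r_up inord_val eqxx.
- by rewrite -r_other inord_val eqxx orbT.
Qed.

Lemma card_sphere2_local_star i (s : 'I_t.+1) :
  s < t -> (forall j k, e i j -> e j k -> k = i) -> #|sphere2 E (Some (i, s))| <= 3.
Proof.
move=> s_lt local_star.
have sub : sphere2 E (Some (i, s)) \subset None |: [set Some (i, r) | r in two_step_levels s].
  apply/subsetP => -[[k q]|]; rewrite !inE //= => /andP [/andP [y_neq _]].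
  case/existsP => -[[j r]|]; last by rewrite (ltn_eqF s_lt).
  case/andP => /andP [ij sr] /andP [jk rq]; rewrite (local_star j k ij jk) in y_neq *.
  apply/imsetP; exists q => //; rewrite inE; apply/andP; split.
    by apply: contraNneq y_neq => /val_inj ->.
  by apply/existsP; exists r; apply/andP.
apply: leq_trans (subset_leq_card sub) _; rewrite cardsU1.
exact: leq_add (leq_b1 _) (leq_trans (leq_imset_card _ _) (card_two_step_levels s)).
Qed.

(* No vertex u_i^s with s < t has the root profile: it would have n = 2 deg(i)
   but at most 3 vertices at distance two, while n > 2. *)
Lemma no_root_profile_below i (s : 'I_t.+1) :
  s < t -> root_profile E #|T| (Some (i, s)) -> False.
Proof.
move=> s_lt prof.
suff local_star : forall j k, e i j -> e j k -> k = i.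
  have := card_sphere2_local_star s_lt local_star; case: prof => deg _ _ ->.
  move: deg; rewrite card_nbhd_S card_level_nbhd_lt // (ltn_eqF s_lt).
  by have := card_gt2; lia.
have [s0 | s_pos] := posnP s.
  have [t1 | t_gt1] : t = 1 \/ 1 < t by lia.
    by case: (no_root_profile_bottom_single s0 t1 prof).
  exact: root_profile_bottom_local_star s0 t_gt1 prof.
by apply: root_profile_middle_local_star prof; rewrite s_pos.
Qed.

Lemma myc_aut_fixes_root (f : {perm V}) : is_aut E f -> f None = None.
Proof.
move=> /is_autP fE; case f_root: (f None) => [[i s]|] //; exfalso.
have := root_profile_aut fE (root_profile_root t_ge1 e_sym no_isolated).
rewrite f_root; have [s_lt | s_top] := ltnP s t.
  exact: no_root_profile_below.
by apply: no_root_profile_top; have := ltn_ord s; lia.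
Qed.
End RootFixed.

(* The graph C: mu_t(H) (left summand) with l pendant vertices at w (right summand). *)
Section PendantVertices.
Variables (T : finType) (e : rel T) (t l : nat).
Local Notation V := (option (T * 'I_t.+1)).
Local Notation W := (V + 'I_l)%type.
Local Notation E := (myc_rel e t).
Local Notation E' := (myc_pendant_rel e t l).
Hypothesis t_ge1 : 1 <= t.
Hypothesis l_ge1 : 1 <= l.
Hypothesis e_sym : symmetric e.
Hypothesis no_isolated : forall x, exists y, e x y.
Hypothesis has_edge : exists a b, e a b.

Lemma card_nbhd_pendant j : #|nbhd E' (inr j)| = 1.
Proof. by rewrite -(cards1 (inl None : W)); apply: eq_card => -[a|k]; rewrite !inE. Qed.

Lemma card_nbhd_base_gt1 a : 1 < #|nbhd E' (inl a)|.
Proof.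
have -> : #|nbhd E' (inl a)| = #|nbhd E a| + (a == None) * l.
  rewrite /nbhd card_sum_pred /=; congr (_ + _).
  by case: (a == None); rewrite ?cardsT ?card_ord ?cards0 ?mul1n.
case: a => [[i s]|] /=.
  rewrite card_nbhd_S; have := nbhd_nonempty no_isolated i; have [s_lt|s_top] := ltnP s t.
    by rewrite card_level_nbhd_lt //; lia.
  have s_eq : s = t :> nat by have := ltn_ord s; lia.
  by rewrite s_eq eqxx card_level_nbhd_top //; lia.
have [a _] := has_edge; case: (root_profile_root t_ge1 e_sym no_isolated) => -> _ _ _.
have : 0 < #|T| by apply/card_gt0P; exists a.
by lia.
Qed.

Definition is_base (x : W) : bool := if x is inl _ then true else false.

Lemma aut_preserves_base (g : {perm W}) x : is_aut E' g -> is_base (g x) = is_base x.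
Proof.
move=> /is_autP gE; have := card_nbhd_aut gE x.
case: x => [a|j]; case: (g _) => [b|k] //= deg_eq.
  by have := card_nbhd_base_gt1 a; rewrite -deg_eq card_nbhd_pendant.
by have := card_nbhd_base_gt1 b; rewrite deg_eq card_nbhd_pendant.
Qed.

Section Restriction.
Variable g : {perm W}.
Hypothesis g_aut : is_aut E' g.

Definition restrict_fun (a : V) : V := if g (inl a) is inl b then b else a.

Lemma restrict_funE a : g (inl a) = inl (restrict_fun a).
Proof.
by rewrite /restrict_fun; have := aut_preserves_base (inl a) g_aut; case: (g (inl a)).
Qed.

Lemma restrict_fun_inj : injective restrict_fun.
Proof.
move=> a b eq_ab; apply: (@inl_inj _ 'I_l); apply: (@perm_inj _ g).
by rewrite !restrict_funE eq_ab.
Qed.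

Definition restrict_perm : {perm V} := perm restrict_fun_inj.

Lemma restrict_permE a : g (inl a) = inl (restrict_perm a).
Proof. by rewrite permE restrict_funE. Qed.

Lemma restrict_perm_aut : is_aut E restrict_perm.
Proof.
apply/is_autP => a b; have /is_autP gE := g_aut.
by have := gE (inl a) (inl b); rewrite !restrict_permE.
Qed.
End Restriction.

Section Extension.
Variable h : {perm V}.

Definition extend_fun (x : W) : W := if x is inl a then inl (h a) else x.

Lemma extend_fun_inj : injective extend_fun.
Proof. by move=> [a|j] [b|k] //= [/perm_inj ->]. Qed.

Definition extend_perm : {perm W} := perm extend_fun_inj.

Lemma extend_perm_aut : is_aut E h -> h None = None -> is_aut E' extend_perm.
Proof.
move=> /is_autP hE h_root; apply/is_autP => x y.
have h_root_eq a : (h a == None) = (a == None) by rewrite -{1}h_root (inj_eq perm_inj).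
by rewrite !permE; case: x => [a|j]; case: y => [b|k] //=; rewrite h_root_eq.
Qed.
End Extension.

Lemma swap_pendants_aut (j1 j2 : 'I_l) : is_aut E' (tperm (inr j1 : W) (inr j2)).
Proof.
have swap_base a : tperm (inr j1 : W) (inr j2) (inl a) = inl a by rewrite tpermD.
have swap_pendant j : exists k, tperm (inr j1 : W) (inr j2) (inr j) = inr k.
  by case: tpermP => *; eexists.
apply/is_autP => -[a|j] [b|k]; rewrite ?swap_base //.
- by have [k' ->] := swap_pendant k.
- by have [j' ->] := swap_pendant j.
- by have [j' ->] := swap_pendant j; have [k' ->] := swap_pendant k.
Qed.

Lemma det_pendant_upper : det_num E' <= det_num E + l - 1.
Proof.
have [S card_S det_S] := det_num_witness E; move/determiningP: det_S => det_S.
pose j0 : 'I_l := Ordinal l_ge1.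
pose S' : {set W} := inl @: S :|: inr @: [set~ j0].
have -> : det_num E + l - 1 = #|S'|.
  rewrite card_sum_set.
  have -> : [set a | inl a \in S'] = S by apply/setP => a; rewrite inE mem_inl_sum_set.
  have -> : [set j | inr j \in S'] = [set~ j0] by apply/setP => j; rewrite inE mem_inr_sum_set.
  by rewrite cardsC1 card_ord card_S; lia.
apply: det_num_le; apply/determiningP => g g_aut g_fix.
have g_pendant j : j != j0 -> g (inr j) = inr j.
  by move=> j_neq; apply: g_fix; rewrite mem_inr_sum_set !inE.
have base_id : restrict_perm g_aut = 1%g.
  apply: det_S => [|a a_in]; first exact: restrict_perm_aut.
  by apply: (@inl_inj _ 'I_l); rewrite -restrict_permE g_fix // mem_inl_sum_set.
apply/permP => -[a|j]; first by rewrite restrict_permE base_id !perm1.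
rewrite perm1; have [j_eq | /g_pendant //] := eqVneq j j0.
case g_j: (g (inr j)) => [b|k]; first by have := aut_preserves_base (inr j) g_aut; rewrite g_j.
have [k_eq | k_neq] := eqVneq k j0; first by rewrite k_eq j_eq.
by have /perm_inj [->] : g (inr k) = g (inr j) by rewrite g_j g_pendant.
Qed.

(* A determining set of C restricts to one of mu_t(H) (using that w is fixed) and
   misses at most one pendant, since swapping two missed pendants fixes it. *)
Lemma det_pendant_lower : (forall h : {perm V}, is_aut E h -> h None = None) ->
  det_num E + l - 1 <= det_num E'.
Proof.
move=> root_fixed; have [S' card_S' det_S'] := det_num_witness E'.
move/determiningP: det_S' => det_S'.
pose S := [set a | inl a \in S']; pose J := [set j | inr j \in S'].
rewrite -card_S' card_sum_set -/S -/J.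
have det_S : determining E S.
  apply/determiningP => h h_aut h_fix.
  have ext_id : extend_perm h = 1%g.
    apply: det_S' (extend_perm_aut h_aut (root_fixed h h_aut)) _ => -[a|j] x_in.
    - by rewrite permE /= h_fix // inE.
    - by rewrite permE.
  apply/permP => a; have := congr1 (fun p : {perm W} => p (inl a)) ext_id.
  by rewrite permE !perm1 => -[].
suff J_large : l - 1 <= #|J| by have := det_num_le det_S; lia.
rewrite leqNgt; apply/negP => J_small.
have : 1 < #|~: J| by have := cardsC J; rewrite card_ord; lia.
case/card_gt1P => j1 [j2 [j1_out j2_out j12]]; rewrite !inE in j1_out j2_out.
have swap_id : tperm (inr j1 : W) (inr j2) = 1%g.
  apply: det_S' (swap_pendants_aut j1 j2) _ => x x_in.
  by rewrite tpermD //; [apply: contraNneq j1_out | apply: contraNneq j2_out] => ->.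
have := congr1 (fun p : {perm W} => p (inr j1)) swap_id.
by rewrite tpermL perm1 => -[/eqP]; rewrite eq_sym (negbTE j12).
Qed.
End PendantVertices.

Unset Implicit Arguments.

Theorem mainTheorem10 (T : finType) (e : rel T) (t l : nat) :
  simple_graph e ->
  (exists x y, e x y) ->
  (forall x, exists y, e x y) ->
  (forall m, 1 <= m -> ~ isomorphic e (star_rel m)) ->
  1 <= t -> 1 <= l ->
  det_num (myc_pendant_rel e t l) = det_num (myc_rel e t) + l - 1.
Proof.
move=> [e_sym e_irr] has_edge no_isolated not_star t_ge1 l_ge1.
have no_star_centre c : ~ star_centre e c.
  move=> centre; have card_ge2 := card_ge2_of_edge e_irr has_edge.
  apply: (not_star #|T|.-1); first by lia.
  exact: star_centre_isomorphic e_irr e_sym centre card_ge2.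
have root_fixed := myc_aut_fixes_root t_ge1 e_sym e_irr no_isolated has_edge no_star_centre.
apply/eqP; rewrite eqn_leq (det_pendant_upper t_ge1 l_ge1 e_sym no_isolated has_edge).
exact: det_pendant_lower root_fixed.
Qed.
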